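(* Let $\mathcal T$ be the suffix tree of a text of length $n$ and $d=\lceil\log_2 n\rceil$. For any sequence of nodes $u_1,\dots,u_t$ of $\mathcal T$ with $u_i=\mathrm{wlink}(u_{i-1},a_{i-1})$ for some symbols $a_{i-1}$ ($2\le i\le t$), at most one of the Weiner links $\mathrm{wlink}(u_{i-1},a_{i-1})$ is difficult.
   Context: For a node $v$ of $\mathcal T$ whose path label is $p$ and a symbol $c$ such that $cp$ occurs in the text, $\mathrm{wlink}(v,c)$ is the locus of $cp$ in $\mathcal T$. A node is heavy if it has at least $d$ leaf descendants and light otherwise. A Weiner link $\mathrm{wlink}(v,a)$ is difficult if its target node is light and its source node $v$ is heavy. *)

From mathcomp Require Import all_boot.
Set Implicit Arguments. Unset Strict Implicit. Unset Printing Implicit Defensive.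

Section SuffixTree.
Variable T : eqType.
Implicit Types (t p q : seq T) (c : T).

Definition factors t : seq (seq T) :=
  undup [seq take j (drop i t) | i <- iota 0 (size t).+1, j <- iota 0 (size t).+1].

Definition right_maximal t p : bool :=
  has (fun a => has (fun b => [&& a != b, infix (rcons p a) t & infix (rcons p b) t]) t) t.

(* The nodes of the (compacted) suffix tree of t are identified with their
   path labels: the root (empty label), the internal nodes (right-maximal
   factors) and the leaves (non-empty suffixes; the text is assumed to end
   with a unique terminator symbol). *)
Definition st_node t p : bool :=
  [|| p == [::], right_maximal t p | (p != [::]) && suffix p t].

Definition st_nodes t : seq (seq T) := [seq p <- factors t | st_node t p].

Definition st_desc p q : bool := prefix p q.

Definition st_leaf t p : bool :=
  st_node t p && all (fun q => st_desc p q ==> (q == p)) (st_nodes t).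

Definition leaf_desc t p : nat :=
  count (fun q => st_leaf t q && st_desc p q) (st_nodes t).

Definition locus t (s v : seq T) : Prop :=
  st_node t v /\ prefix s v /\ (forall w, st_node t w -> prefix s w -> prefix v w).

Definition wlink t (v : seq T) c (u : seq T) : Prop :=
  st_node t v /\ infix (c :: v) t /\ locus t (c :: v) u.

Definition heavy t (d : nat) p : bool := d <= leaf_desc t p.
Definition light t (d : nat) p : bool := ~~ heavy t d p.

Definition difficult t d (v u : seq T) : bool := light t d u && heavy t d v.

End SuffixTree.

From mathcomp Require Import all_boot.
Set Implicit Arguments. Unset Strict Implicit.

(* Prepending a symbol to a path label can only shrink the set of leaves below
   it: the leaves under wlink(v, c) are the suffixes c w of the text with w a
   leaf under v, and w |-> c w is injective.  So the leaf count is
   nonincreasing along any chain of Weiner links; once a node is light, every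
   later node is light, and a difficult link needs a heavy source.  The
   argument works for any threshold d, not only ceil(log2 n). *)

Lemma nonincreasing_threshold_crossing_unique (f : nat -> nat) (n d : nat) :
    (forall k, k.+1 < n -> f k.+1 <= f k) ->
  forall i j, i.+1 < n -> j.+1 < n ->
    f i.+1 < d <= f i -> f j.+1 < d <= f j -> i = j.
Proof.
move=> f_step.
have f_mono : {in gtn n &, {homo f : k l / k <= l >-> l <= k}}.
  apply: homo_leq_in => [k | l k m lk ml | k l _ ln m /andP[_ ml] | k _].
  - exact: leqnn.
  - exact: leq_trans ml lk.
  - by rewrite inE (ltn_trans ml).
  - by rewrite inE; exact: f_step.
have no_later_crossing k l : k < l -> l.+1 < n ->
    f k.+1 < d -> d <= f l -> False.
  move=> kl ln fk dl.
  have fl_le : f l <= f k.+1.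
    by apply: f_mono; rewrite ?inE ?(leq_ltn_trans kl) // ltnW.
  by have := leq_ltn_trans (leq_trans dl fl_le) fk; rewrite ltnn.
move=> i j ilt jlt /andP[fi di] /andP[fj dj].
case: (ltngtP i j) => // [ij | ji]; exfalso.
- exact: no_later_crossing ij jlt fi dj.
- exact: no_later_crossing ji ilt fj di.
Qed.

Lemma mem_factors (T : eqType) (t p : seq T) : (p \in factors t) = infix p t.
Proof.
rewrite /factors mem_undup; apply/idP/idP.
- case/allpairsP=> [[i j] /= [_ _ ->]].
  exact: infix_trans (prefixW (prefix_take _ _)) (suffixW (suffix_drop _ _)).
- case/infixP=> x [y] t_eq; apply/allpairsP; exists (size x, size p).
  rewrite !mem_iota /= !add0n !ltnS t_eq !size_cat drop_size_cat // take_size_cat //.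
  by rewrite leq_addr addnCA leq_addr.
Qed.

Section TerminatedText.
Variables (T : eqType) (s : seq T) (dollar : T).
Hypothesis dollar_notin : dollar \notin s.
Local Notation t := (s ++ [:: dollar]).

Lemma suffix_node (q : seq T) : q != [::] -> suffix q t -> q \in st_nodes t.
Proof.
move=> q0 qt; rewrite mem_filter mem_factors (suffixW qt) andbT.
by rewrite /st_node q0 qt !orbT.
Qed.

Lemma terminator_last (a b : seq T) : t = a ++ dollar :: b -> b = [::].
Proof.
case/lastP: b => [//|b e]; rewrite cats1 -rcons_cons -rcons_cat.
move/eqP; rewrite eqseq_rcons => /andP[/eqP s_eq _].
by move: dollar_notin; rewrite s_eq mem_cat mem_head orbT.
Qed.

(* A non-empty suffix ends with the unique terminator, so it cannot be
   extended to the right inside the text. *)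
Lemma suffix_maximal (q z : seq T) :
  q != [::] -> suffix q t -> infix (q ++ z) t -> z = [::].
Proof.
case/lastP: q => [//|q e] _ /suffixP[w /eqP w_eq].
have <- : dollar = e.
  by move: w_eq; rewrite cats1 -rcons_cat eqseq_rcons => /andP[_ /eqP].
case/infixP=> x [y] t_eq; have := @terminator_last (x ++ q) (z ++ y).
rewrite t_eq -cats1 -!catA => /(_ erefl)/nilP.
by rewrite cat_nilp => /andP[/nilP].
Qed.

Lemma st_leafE (q : seq T) : st_leaf t q = (q != [::]) && suffix q t.
Proof.
apply/idP/idP => [/andP[q_node /allP q_max] | /andP[q0 qt]].
- have t0 : t != [::] by case: (s).
  case/or3P: q_node => [/eqP q_eq | q_rmax | //].
    have := q_max t (suffix_node t0 (suffix_refl _)).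
    by rewrite q_eq /st_desc prefix0s (negbTE t0).
  case/hasP: q_rmax => a _ /hasP[b _ /and3P[_ /infixP[x [y] t_eq] _]].
  have qay_node : rcons q a ++ y \in st_nodes t.
    by apply: suffix_node; [case: (q) | rewrite t_eq suffix_suffix].
  move/implyP: (q_max _ qay_node).
  rewrite /st_desc -cats1 -catA prefix_prefix => /(_ isT)/eqP/(congr1 size).
  by rewrite size_cat /= => /eqP; rewrite -{2}[size q]addn0 eqn_add2l.
- rewrite /st_leaf /st_node q0 qt !orbT; apply/allP => w.
  rewrite mem_filter mem_factors => /andP[_ wt]; apply/implyP.
  case/prefixP=> z w_eq; move: wt.
  by rewrite w_eq => /(suffix_maximal q0 qt)->; rewrite cats0.
Qed.

Lemma count_leaves_below_cons (c : T) (v : seq T) :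
  count (fun q => st_leaf t q && prefix (c :: v) q) (st_nodes t)
    <= count (fun q => st_leaf t q && prefix v q) (st_nodes t).
Proof.
have [-> | v0] := eqVneq v [::].
  by apply: sub_count => q /andP[-> _]; rewrite prefix0s.
have nodes_uniq : uniq (st_nodes t) by exact/filter_uniq/undup_uniq.
rewrite -!size_filter; set L := filter _ _.
have L_cons q : q \in L -> q = c :: behead q.
  by rewrite mem_filter => /andP[/andP[_]]; case: q => //= x q /andP[/eqP ->].
rewrite -(size_map behead); apply: uniq_leq_size.
  rewrite map_inj_in_uniq; first exact: filter_uniq.
  by move=> q1 q2 /L_cons-> /L_cons-> /= ->.
move=> w /mapP[q qL ->]; move: (qL); rewrite mem_filter st_leafE.
case/andP=> /andP[/andP[_ qt]]; rewrite {1}(L_cons q qL) prefix_cons.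
case/andP=> _ vw _.
have w0 : behead q != [::].
  by apply: contra v0 => /eqP w0; rewrite w0 prefixs0 in vw.
have wt : suffix (behead q) t.
  by apply: suffix_trans qt; rewrite {2}(L_cons q qL) suffix_cons.
by rewrite mem_filter st_leafE w0 wt vw suffix_node.
Qed.

Lemma leaf_desc_wlink (v : seq T) (c : T) (u : seq T) :
  wlink t v c u -> leaf_desc t u <= leaf_desc t v.
Proof.
move=> [_ [_ [_ [cv_u _]]]]; apply: leq_trans (count_leaves_below_cons c v).
by apply: sub_count => q /andP[-> /(prefix_trans cv_u)].
Qed.

End TerminatedText.

Lemma difficultE (T : eqType) (t : seq T) d (v u : seq T) :
  difficult t d v u = (leaf_desc t u < d <= leaf_desc t v).
Proof. by rewrite /difficult /light /heavy -ltnNge. Qed.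

Theorem proposition7 (T : eqType) (s : seq T) (dollar : T)
    (us : seq (seq T)) (as_ : seq T) :
  dollar \notin s ->
  let t := s ++ [:: dollar] in
  let d := up_log 2 (size t) in
  size as_ = (size us).-1 ->
  (forall i, i.+1 < size us ->
     wlink t (nth [::] us i) (nth dollar as_ i) (nth [::] us i.+1)) ->
  forall i j, i.+1 < size us -> j.+1 < size us ->
    difficult t d (nth [::] us i) (nth [::] us i.+1) ->
    difficult t d (nth [::] us j) (nth [::] us j.+1) ->
    i = j.
Proof.
move=> dollar_notin t d _ chain i j ilt jlt.
rewrite !difficultE.
pose leaves k := leaf_desc t (nth [::] us k).
apply: (@nonincreasing_threshold_crossing_unique leaves) ilt jlt.
by move=> k klt; exact: leaf_desc_wlink dollar_notin _ _ _ (chain k klt).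
Qed.
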